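(* Let $A$ (in $\mathcal H$) and $B$ (in $\mathcal K$) be closed densely defined operators with $A\dashv B$, with a (possibly unbounded) intertwining operator $T$, and assume that $T^{-1}$ is bounded and everywhere defined on $\mathcal K$. Then $\rho(A)\setminus\sigma_p(B)\subseteq\rho(B)$.
   Context: A closed, densely defined operator $T:\mathcal H\to\mathcal K$ is called an intertwining operator for $A$ and $B$ if: (io$_0$) $D(A)\subset D(T)$ and $D(TA)=D(A)$; (io$_1$) $T$ maps $D(A)$ into $D(B)$; (io$_2$) $BT\xi=TA\xi$ for all $\xi\in D(A)$. We write $A\dashv B$ if there exists an intertwining operator $T$ for $A$ and $B$ which is injective with densely defined inverse $T^{-1}$. $\rho$ denotes the resolvent set, $\sigma_p$ the point spectrum. *)

From Stdlib Require Import Reals.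
Open Scope R_scope.

Set Implicit Arguments.

Record Cpx := mkC { Re : R ; Im : R }.
Definition C0 : Cpx := mkC 0 0.
Definition C1 : Cpx := mkC 1 0.
Definition Cadd (z w : Cpx) : Cpx := mkC (Re z + Re w) (Im z + Im w).
Definition Copp (z : Cpx) : Cpx := mkC (- Re z) (- Im z).
Definition Cmul (z w : Cpx) : Cpx :=
  mkC (Re z * Re w - Im z * Im w) (Re z * Im w + Im z * Re w).
Definition Cconj (z : Cpx) : Cpx := mkC (Re z) (- Im z).

Definition cauchy_wrt {V : Type} (d : V -> V -> R) (u : nat -> V) : Prop :=
  forall eps, eps > 0 -> exists N : nat,
    forall n m, (n >= N)%nat -> (m >= N)%nat -> d (u n) (u m) < eps.
Definition conv_wrt {V : Type} (d : V -> V -> R) (u : nat -> V) (l : V) : Prop :=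
  forall eps, eps > 0 -> exists N : nat, forall n, (n >= N)%nat -> d (u n) l < eps.

(** * Complex Hilbert spaces (inner product linear in the first argument) *)
Record HilbertSpace := {
  hs_car :> Type;
  hs_zero : hs_car;
  hs_add : hs_car -> hs_car -> hs_car;
  hs_opp : hs_car -> hs_car;
  hs_scal : Cpx -> hs_car -> hs_car;
  hs_inner : hs_car -> hs_car -> Cpx;
  hs_add_assoc : forall x y z, hs_add x (hs_add y z) = hs_add (hs_add x y) z;
  hs_add_comm : forall x y, hs_add x y = hs_add y x;
  hs_add_0_l : forall x, hs_add hs_zero x = x;
  hs_add_opp_l : forall x, hs_add (hs_opp x) x = hs_zero;
  hs_scal_assoc : forall a b x, hs_scal a (hs_scal b x) = hs_scal (Cmul a b) x;
  hs_scal_1 : forall x, hs_scal C1 x = x;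
  hs_scal_add_r : forall a x y, hs_scal a (hs_add x y) = hs_add (hs_scal a x) (hs_scal a y);
  hs_scal_add_l : forall a b x, hs_scal (Cadd a b) x = hs_add (hs_scal a x) (hs_scal b x);
  hs_inner_add_l : forall x y z, hs_inner (hs_add x y) z = Cadd (hs_inner x z) (hs_inner y z);
  hs_inner_scal_l : forall a x y, hs_inner (hs_scal a x) y = Cmul a (hs_inner x y);
  hs_inner_conj : forall x y, hs_inner y x = Cconj (hs_inner x y);
  hs_inner_pos : forall x, 0 <= Re (hs_inner x x);
  hs_inner_def : forall x, hs_inner x x = C0 -> x = hs_zero;
  hs_complete : forall u : nat -> hs_car,
    cauchy_wrt (fun x y => sqrt (Re (hs_inner (hs_add x (hs_opp y)) (hs_add x (hs_opp y))))) u ->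
    exists l, conv_wrt (fun x y => sqrt (Re (hs_inner (hs_add x (hs_opp y)) (hs_add x (hs_opp y))))) u l
}.

Arguments hs_zero {h}.
Arguments hs_add {h}.
Arguments hs_opp {h}.
Arguments hs_scal {h}.
Arguments hs_inner {h}.

Definition vsub {H : HilbertSpace} (x y : H) : H := hs_add x (hs_opp y).
Definition norm {H : HilbertSpace} (x : H) : R := sqrt (Re (hs_inner x x)).
Definition converges {H : HilbertSpace} (u : nat -> H) (l : H) : Prop :=
  conv_wrt (fun x y => norm (vsub x y)) u l.

(** * (Possibly unbounded) operators: a domain and an action on it.
    Values of [app] outside [dom] are irrelevant. *)
Record Op (H K : HilbertSpace) := { dom : H -> Prop ; app : H -> K }.

Definition is_linear_op {H K : HilbertSpace} (A : Op H K) : Prop :=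
  dom A hs_zero /\
  (forall x y, dom A x -> dom A y ->
     dom A (hs_add x y) /\ app A (hs_add x y) = hs_add (app A x) (app A y)) /\
  (forall a x, dom A x -> dom A (hs_scal a x) /\ app A (hs_scal a x) = hs_scal a (app A x)).

Definition densely_defined {H K : HilbertSpace} (A : Op H K) : Prop :=
  forall x eps, eps > 0 -> exists d, dom A d /\ norm (vsub x d) < eps.

Definition closed_op {H K : HilbertSpace} (A : Op H K) : Prop :=
  forall (u : nat -> H) x y, (forall n, dom A (u n)) ->
    converges u x -> converges (fun n => app A (u n)) y ->
    dom A x /\ app A x = y.

Definition closed_dd_op {H K : HilbertSpace} (A : Op H K) : Prop :=
  is_linear_op A /\ closed_op A /\ densely_defined A.

Definition intertwining {H K : HilbertSpace} (T : Op H K) (A : Op H H) (B : Op K K) : Prop :=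
  closed_dd_op T /\
  (* io0: D(A) ⊂ D(T) and D(TA) = D(A), i.e. A ξ ∈ D(T) for ξ ∈ D(A) *)
  (forall xi, dom A xi -> dom T xi) /\
  (forall xi, dom A xi -> dom T (app A xi)) /\
  (forall xi, dom A xi -> dom B (app T xi)) /\
  (forall xi, dom A xi -> app B (app T xi) = app T (app A xi)).

Definition op_injective {H K : HilbertSpace} (T : Op H K) : Prop :=
  forall x y, dom T x -> dom T y -> app T x = app T y -> x = y.

(** T^{-1} (with domain the range of T) is densely defined. *)
Definition inverse_densely_defined {H K : HilbertSpace} (T : Op H K) : Prop :=
  forall k eps, eps > 0 -> exists x, dom T x /\ norm (vsub k (app T x)) < eps.

Definition inverse_bounded_everywhere {H K : HilbertSpace} (T : Op H K) : Prop :=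
  (forall k, exists x, dom T x /\ app T x = k) /\
  (exists c, forall x, dom T x -> norm x <= c * norm (app T x)).

Definition dashv_via {H K : HilbertSpace} (T : Op H K) (A : Op H H) (B : Op K K) : Prop :=
  intertwining T A B /\ op_injective T /\ inverse_densely_defined T.

Definition shift_app {H : HilbertSpace} (A : Op H H) (lam : Cpx) (x : H) : H :=
  vsub (app A x) (hs_scal lam x).

Definition in_resolvent {H : HilbertSpace} (A : Op H H) (lam : Cpx) : Prop :=
  (forall x y, dom A x -> dom A y -> shift_app A lam x = shift_app A lam y -> x = y) /\
  (forall h, exists x, dom A x /\ shift_app A lam x = h) /\
  (exists c, forall x, dom A x -> norm x <= c * norm (shift_app A lam x)).

Definition in_point_spectrum {H : HilbertSpace} (A : Op H H) (lam : Cpx) : Prop :=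
  exists x, dom A x /\ x <> hs_zero /\ app A x = hs_scal lam x.

(** Let λ ∈ ρ(A) not be an eigenvalue of B.  The operator B - λ (on D(B)) is
    - injective, because λ ∉ σ_p(B);
    - surjective: given g ∈ K, write g = T h (T^{-1} is everywhere defined),
      h = (A - λ) ξ with ξ ∈ D(A); then Tξ ∈ D(B) and, by the intertwining
      relation B T = T A on D(A), (B - λ) T ξ = T (A - λ) ξ = g;
    - closed, because B is closed and λ is a bounded perturbation.
    A closed linear bijection of a Hilbert space onto itself has a bounded
    inverse (bounded inverse theorem), hence λ ∈ ρ(B). *)

From Stdlib Require Import Reals Lra Lia Classical IndefiniteDescription
  FunctionalExtensionality.
Open Scope R_scope.

Section VectorAlgebra.
Variable V : HilbertSpace.
Implicit Types x y z a b c d : V.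

Lemma add_0_r x : hs_add x hs_zero = x.
Proof. rewrite hs_add_comm; apply hs_add_0_l. Qed.

Lemma add_opp_r x : hs_add x (hs_opp x) = hs_zero.
Proof. rewrite hs_add_comm; apply hs_add_opp_l. Qed.

Lemma add_cancel_r a b x : hs_add a x = hs_add b x -> a = b.
Proof.
  intro E.
  rewrite <- (add_0_r a), <- (add_0_r b), <- (add_opp_r x), !hs_add_assoc, E.
  reflexivity.
Qed.

Lemma opp_unique a b : hs_add a b = hs_zero -> hs_opp a = b.
Proof.
  intro E.
  rewrite <- (add_0_r (hs_opp a)), <- E, hs_add_assoc, hs_add_opp_l, hs_add_0_l.
  reflexivity.
Qed.

Lemma opp_opp x : hs_opp (hs_opp x) = x.
Proof. apply opp_unique, hs_add_opp_l. Qed.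

Lemma add_swap a b c d :
  hs_add (hs_add a b) (hs_add c d) = hs_add (hs_add a c) (hs_add b d).
Proof.
  rewrite <- !hs_add_assoc. f_equal. rewrite !hs_add_assoc. f_equal.
  apply hs_add_comm.
Qed.

Lemma opp_add x y : hs_opp (hs_add x y) = hs_add (hs_opp x) (hs_opp y).
Proof. apply opp_unique. rewrite add_swap, !add_opp_r; apply hs_add_0_l. Qed.

Lemma vsub_diag x : vsub x x = hs_zero.
Proof. apply add_opp_r. Qed.

Lemma vsub_add a b c d : vsub (hs_add a b) (hs_add c d) = hs_add (vsub a c) (vsub b d).
Proof. unfold vsub. rewrite opp_add; apply add_swap. Qed.

Lemma vsub_chain a b c : vsub a c = hs_add (vsub a b) (vsub b c).
Proof.
  unfold vsub. rewrite <- hs_add_assoc. f_equal.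
  rewrite hs_add_assoc, hs_add_opp_l, hs_add_0_l; reflexivity.
Qed.

Lemma vsub_sym a b : vsub a b = hs_opp (vsub b a).
Proof. unfold vsub. rewrite opp_add, opp_opp; apply hs_add_comm. Qed.

Lemma vsub_eq0 x y : vsub x y = hs_zero -> x = y.
Proof.
  intro E. rewrite <- (hs_add_0_l _ y), <- E. unfold vsub.
  rewrite <- hs_add_assoc, hs_add_opp_l, add_0_r; reflexivity.
Qed.

Lemma vsub_add_cancel a b : vsub (hs_add a b) b = a.
Proof. unfold vsub. rewrite <- hs_add_assoc, add_opp_r, add_0_r; reflexivity. Qed.

Lemma vsub_add_back a b : hs_add (vsub a b) b = a.
Proof. unfold vsub. rewrite <- hs_add_assoc, hs_add_opp_l, add_0_r; reflexivity. Qed.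

Lemma vsub_add_cancel_l a b : vsub (hs_add a b) a = b.
Proof. rewrite hs_add_comm; apply vsub_add_cancel. Qed.

Lemma vsub_add_r x a b : vsub x (hs_add a b) = vsub (vsub x a) b.
Proof. unfold vsub. rewrite opp_add, hs_add_assoc. reflexivity. Qed.

(** Recentring: approximating [h] by [g1 - g2] is approximating [y0 + h] by
    [g1] and [y0] by [g2]. *)
Lemma vsub_recentre h g1 g2 y0 :
  vsub h (vsub g1 g2) = vsub (vsub (hs_add y0 h) g1) (vsub y0 g2).
Proof.
  change (vsub h (vsub g1 g2) = vsub (hs_add (hs_add y0 h) (hs_opp g1)) (hs_add y0 (hs_opp g2))).
  rewrite vsub_add, vsub_add_cancel_l. unfold vsub. rewrite opp_add. reflexivity.
Qed.

Lemma vsub_0_r x : vsub x hs_zero = x.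
Proof. unfold vsub. rewrite (opp_unique _ _ (hs_add_0_l _ hs_zero)); apply add_0_r. Qed.

Definition mone : Cpx := mkC (-1) 0.

Lemma Cmul_comm (p q : Cpx) : Cmul p q = Cmul q p.
Proof. destruct p, q; unfold Cmul; simpl; f_equal; ring. Qed.

Lemma scal_0_l x : hs_scal C0 x = hs_zero.
Proof.
  symmetry. apply (add_cancel_r _ _ (hs_scal C0 x)).
  rewrite hs_add_0_l, <- hs_scal_add_l.
  f_equal. unfold Cadd, C0; simpl; f_equal; ring.
Qed.

Lemma opp_scal x : hs_opp x = hs_scal mone x.
Proof.
  apply (add_cancel_r _ _ x). rewrite hs_add_opp_l.
  rewrite <- (hs_scal_1 _ x) at 2. rewrite <- hs_scal_add_l, <- (scal_0_l x).
  f_equal. unfold Cadd, mone, C1, C0; simpl; f_equal; ring.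
Qed.

Lemma scal_opp p x : hs_scal p (hs_opp x) = hs_opp (hs_scal p x).
Proof. rewrite !opp_scal, !hs_scal_assoc, Cmul_comm; reflexivity. Qed.

Lemma scal_vsub p x y : hs_scal p (vsub x y) = vsub (hs_scal p x) (hs_scal p y).
Proof. unfold vsub. rewrite hs_scal_add_r, scal_opp; reflexivity. Qed.

Lemma scal_comm p q x : hs_scal p (hs_scal q x) = hs_scal q (hs_scal p x).
Proof. rewrite !hs_scal_assoc, Cmul_comm; reflexivity. Qed.

Lemma scal_inv_real t x : t <> 0 -> hs_scal (mkC (/ t) 0) (hs_scal (mkC t 0) x) = x.
Proof.
  intro Ht. rewrite hs_scal_assoc. rewrite <- (hs_scal_1 _ x) at 2. f_equal.
  unfold Cmul, C1; simpl. apply f_equal2; [field; auto | ring].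
Qed.

(** The real part of the inner product is a real inner product; the norm is
    its square root, so Cauchy–Schwarz and the triangle inequality follow. *)

Definition Rip x y : R := Re (hs_inner x y).

Lemma Rip_sym x y : Rip x y = Rip y x.
Proof. unfold Rip. rewrite (hs_inner_conj V y x). reflexivity. Qed.

Lemma Rip_add_l x y z : Rip (hs_add x y) z = Rip x z + Rip y z.
Proof. unfold Rip. rewrite hs_inner_add_l. reflexivity. Qed.

Lemma Rip_add_r x y z : Rip z (hs_add x y) = Rip z x + Rip z y.
Proof. rewrite !(Rip_sym z). apply Rip_add_l. Qed.

Lemma Rip_scal_l t x y : Rip (hs_scal (mkC t 0) x) y = t * Rip x y.
Proof. unfold Rip. rewrite hs_inner_scal_l. simpl. ring. Qed.

Lemma Rip_scal_r t x y : Rip y (hs_scal (mkC t 0) x) = t * Rip y x.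
Proof. rewrite !(Rip_sym y). apply Rip_scal_l. Qed.

Lemma Rip_pos x : 0 <= Rip x x.
Proof. apply hs_inner_pos. Qed.

Lemma Rip_scal_self p x :
  Rip (hs_scal p x) (hs_scal p x) = (Re p * Re p + Im p * Im p) * Rip x x.
Proof.
  unfold Rip. rewrite hs_inner_scal_l, (hs_inner_conj V (hs_scal p x) x), hs_inner_scal_l.
  destruct p as [a b], (hs_inner x x) as [u v]; simpl. ring.
Qed.

(** Cauchy–Schwarz, from the nonnegativity of the quadratic t ↦ |x + t y|². *)
Lemma cauchy_schwarz x y : Rip x y * Rip x y <= Rip x x * Rip y y.
Proof.
  set (p := Rip x x); set (q := Rip y y); set (s := Rip x y).
  assert (Quad : forall t, 0 <= p + 2 * t * s + t * t * q).
  { intro t. pose proof (Rip_pos (hs_add x (hs_scal (mkC t 0) y))) as P.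
    rewrite Rip_add_l, !Rip_add_r, !Rip_scal_l, !Rip_scal_r, (Rip_sym y x) in P.
    unfold p, q, s. nra. }
  assert (q0 : 0 <= q) by apply Rip_pos.
  destruct (Req_dec q 0) as [Eq|Nq].
  - destruct (Req_dec s 0) as [Es|Ns].
    + rewrite Es, Eq. nra.
    + exfalso. specialize (Quad (- (p + 1) / (2 * s))). rewrite Eq in Quad.
      replace (p + 2 * (- (p + 1) / (2 * s)) * s + - (p + 1) / (2 * s) * (- (p + 1) / (2 * s)) * 0)
        with (-1) in Quad by (field; auto). lra.
  - set (u := s / q). assert (su : s = u * q) by (unfold u; field; auto).
    specialize (Quad (- u)). rewrite su in Quad |- *. nra.
Qed.

Lemma norm_nonneg x : 0 <= norm x.
Proof. apply sqrt_pos. Qed.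

Lemma norm_triangle x y : norm (hs_add x y) <= norm x + norm y.
Proof.
  unfold norm. fold (Rip x x) (Rip y y) (Rip (hs_add x y) (hs_add x y)).
  rewrite Rip_add_l, !Rip_add_r, (Rip_sym y x).
  pose proof (Rip_pos x) as Px; pose proof (Rip_pos y) as Py.
  assert (CS : Rip x y <= sqrt (Rip x x) * sqrt (Rip y y)).
  { rewrite <- sqrt_mult by auto.
    apply Rle_trans with (Rabs (Rip x y)); [apply Rle_abs|].
    rewrite <- sqrt_Rsqr_abs. apply sqrt_le_1_alt. apply cauchy_schwarz. }
  pose proof (sqrt_pos (Rip x x)); pose proof (sqrt_pos (Rip y y)).
  rewrite <- (sqrt_square (sqrt (Rip x x) + sqrt (Rip y y))) by lra.
  apply sqrt_le_1_alt.
  pose proof (sqrt_sqrt (Rip x x) Px); pose proof (sqrt_sqrt (Rip y y) Py). nra.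
Qed.

Lemma norm_scal p x : norm (hs_scal p x) = sqrt (Re p * Re p + Im p * Im p) * norm x.
Proof.
  unfold norm. fold (Rip (hs_scal p x) (hs_scal p x)). rewrite Rip_scal_self.
  apply sqrt_mult; [nra | apply Rip_pos].
Qed.

Lemma norm_scal_real t x : 0 <= t -> norm (hs_scal (mkC t 0) x) = t * norm x.
Proof.
  intro. rewrite norm_scal. simpl. f_equal.
  replace (t * t + 0 * 0) with (t * t) by ring. apply sqrt_square; auto.
Qed.

Lemma norm_opp x : norm (hs_opp x) = norm x.
Proof.
  rewrite opp_scal, norm_scal. unfold mone; simpl.
  replace (-1 * -1 + 0 * 0) with 1 by ring. rewrite sqrt_1; ring.
Qed.

Lemma norm_zero : norm (@hs_zero V) = 0.
Proof.
  rewrite <- (scal_0_l hs_zero), norm_scal. unfold C0; simpl.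
  replace (0 * 0 + 0 * 0) with 0 by ring. rewrite sqrt_0; ring.
Qed.

Lemma norm_vsub_sym a b : norm (vsub a b) = norm (vsub b a).
Proof. rewrite vsub_sym, norm_opp; reflexivity. Qed.

Lemma norm_vsub_tri a b c : norm (vsub a c) <= norm (vsub a b) + norm (vsub b c).
Proof. rewrite (vsub_chain a b c). apply norm_triangle. Qed.

Lemma norm_vsub_le a b : norm (vsub a b) <= norm a + norm b.
Proof. unfold vsub. rewrite <- (norm_opp b). apply norm_triangle. Qed.

Lemma norm_le_vsub a b : norm a <= norm b + norm (vsub a b).
Proof. rewrite <- (vsub_add_back a b) at 1. rewrite hs_add_comm. apply norm_triangle. Qed.

End VectorAlgebra.

Section LinearOp.
Variables V W : HilbertSpace.
Variable S : Op V W.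
Hypothesis S_linear : is_linear_op S.

Lemma lin_zero : app S hs_zero = hs_zero.
Proof.
  destruct S_linear as [D0 [Dadd _]]. destruct (Dadd _ _ D0 D0) as [_ E].
  rewrite add_0_r in E. symmetry. apply (add_cancel_r _ _ _ (app S hs_zero)).
  rewrite hs_add_0_l. exact E.
Qed.

Lemma lin_vsub x y : dom S x -> dom S y ->
  dom S (vsub x y) /\ app S (vsub x y) = vsub (app S x) (app S y).
Proof.
  intros Dx Dy. destruct S_linear as [_ [Dadd Dscal]].
  destruct (Dscal mone y Dy) as [D1 E1]. rewrite <- !opp_scal in D1, E1.
  destruct (Dadd _ _ Dx D1) as [D2 E2]. unfold vsub. rewrite E2, E1, <- opp_scal. auto.
Qed.

End LinearOp.

Lemma pow2_pos k : 0 < 2 ^ k.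
Proof. apply pow_lt; lra. Qed.

Lemma geom_small c eps : 0 < eps -> exists N, forall n, (n >= N)%nat -> c / 2 ^ n < eps.
Proof.
  intro He. destruct (INR_unbounded (c / eps)) as [N HN]. exists N. intros n Hn.
  assert (Nn : INR N <= INR n) by (apply le_INR; lia).
  assert (n2 : INR n < 2 ^ n).
  { clear. induction n; [simpl; lra|]. rewrite S_INR. simpl.
    assert (1 <= 2 ^ n) by (apply pow_R1_Rle; lra). lra. }
  pose proof (pow2_pos n).
  assert (Big : c < eps * 2 ^ n).
  { replace c with (c / eps * eps) by (field; lra). nra. }
  apply (Rmult_lt_reg_r (2 ^ n)); [lra|].
  unfold Rdiv. rewrite Rmult_assoc, Rinv_l by lra. lra.
Qed.

Section GeometricSequences.
Variable V : HilbertSpace.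

Lemma limit_in_ball (s : nat -> V) l a b : converges s l ->
  (exists N, forall n, (n >= N)%nat -> norm (vsub (s n) a) <= b) ->
  norm (vsub l a) <= b.
Proof.
  intros Hs [N HN]. apply Rle_plus_epsilon. intros eps He.
  destruct (Hs eps He) as [N' HN'].
  specialize (HN (N + N')%nat ltac:(lia)). specialize (HN' (N + N')%nat ltac:(lia)).
  cbv beta in HN'.
  pose proof (norm_vsub_tri _ l (s (N + N')%nat) a) as Tri.
  rewrite (norm_vsub_sym _ l (s _)) in Tri. lra.
Qed.

Variable s : nat -> V.
Variable c : R.
Hypothesis small_steps : forall k, norm (vsub (s (S k)) (s k)) <= c / 2 ^ k.

Lemma geometric_tail d m : norm (vsub (s (d + m)) (s m)) <= 2 * c / 2 ^ m.
Proof.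
  assert (c0 : 0 <= c).
  { specialize (small_steps 0%nat). pose proof (norm_nonneg _ (vsub (s 1%nat) (s 0%nat))).
    simpl in small_steps. lra. }
  assert (Sharp : forall j, norm (vsub (s (j + m)) (s m)) <= 2 * c * (/ 2 ^ m - / 2 ^ (j + m))).
  { intro j. induction j as [|j IH].
    - change (0 + m)%nat with m. rewrite vsub_diag, norm_zero. lra.
    - pose proof (norm_vsub_tri _ (s (S j + m)%nat) (s (j + m)%nat) (s m)) as Tri.
      specialize (small_steps (j + m)%nat). pose proof (pow2_pos (j + m)).
      assert (E : / 2 ^ (S j + m) = / 2 ^ (j + m) / 2) by (simpl; field; lra).
      rewrite E. unfold Rdiv in *. simpl plus in *. lra. }
  pose proof (Sharp d). pose proof (pow2_pos (d + m)).
  assert (0 <= / 2 ^ (d + m)) by (left; apply Rinv_0_lt_compat; auto).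
  unfold Rdiv. nra.
Qed.

Lemma geometric_limit :
  exists l, converges s l /\ forall m, norm (vsub l (s m)) <= 2 * c / 2 ^ m.
Proof.
  destruct (@hs_complete V s) as [l Hl].
  - intros eps He. destruct (geom_small (4 * c) eps He) as [N HN].
    exists N. intros n m Hn Hm.
    pose proof (geometric_tail (n - N) N) as Tn. pose proof (geometric_tail (m - N) N) as Tm.
    replace (n - N + N)%nat with n in Tn by lia. replace (m - N + N)%nat with m in Tm by lia.
    pose proof (norm_vsub_tri _ (s n) (s N) (s m)) as Tri.
    rewrite (norm_vsub_sym _ (s N)) in Tri.
    specialize (HN N (le_n N)). unfold Rdiv in *. change (norm (vsub (s n) (s m)) < eps). lra.
  - exists l. split; [exact Hl|]. intro m. apply (limit_in_ball s); [exact Hl|].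
    exists m. intros n Hn. replace n with ((n - m) + m)%nat by lia. apply geometric_tail.
Qed.

End GeometricSequences.

Lemma iterate_choice {X : Type} (Step : nat -> X -> X -> Prop) (x0 : X) :
  (forall n x, exists y, Step n x y) ->
  exists u : nat -> X, u 0%nat = x0 /\ forall n, Step n (u n) (u (S n)).
Proof.
  intro Hstep.
  set (next n x := proj1_sig (constructive_indefinite_description _ (Hstep n x))).
  exists (fix u n := match n with 0%nat => x0 | S k => next k (u k) end).
  split; [reflexivity|].
  intro n. exact (proj2_sig (constructive_indefinite_description _ (Hstep n _))).
Qed.

(** ** The Baire category theorem *)

Section Baire.
Variable V : HilbertSpace.

Lemma nested_balls (y : nat -> V) (r : nat -> R) (c : R) :
  (forall k, 0 <= r k) ->
  (forall k, norm (vsub (y (S k)) (y k)) + r (S k) <= r k) ->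
  (forall k, r k <= c / 2 ^ k) ->
  exists z, forall k, norm (vsub z (y k)) <= r k.
Proof.
  intros r_nonneg nested r_small.
  assert (Steps : forall k, norm (vsub (y (S k)) (y k)) <= c / 2 ^ k).
  { intro k. specialize (nested k). specialize (r_small k). pose proof (r_nonneg (S k)). lra. }
  assert (Inside : forall j k : nat, norm (vsub (y (j + k)%nat) (y k)) + r (j + k)%nat <= r k).
  { induction j as [|j IH]; intro k.
    - change (0 + k)%nat with k. rewrite vsub_diag, norm_zero. lra.
    - pose proof (norm_vsub_tri _ (y (S j + k)%nat) (y (j + k)%nat) (y k)).
      specialize (nested (j + k)%nat). specialize (IH k). simpl plus in *. lra. }
  destruct (geometric_limit V y c Steps) as [z [Hz _]].
  exists z. intro k. apply (limit_in_ball _ y); [exact Hz|].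
  exists k. intros n Hn. replace n with ((n - k) + k)%nat by lia.
  pose proof (Inside (n - k)%nat k). pose proof (r_nonneg (n - k + k)%nat). lra.
Qed.

Definition dense_in_ball (P : V -> Prop) (y0 : V) (r : R) : Prop :=
  forall y eps, norm (vsub y y0) < r -> eps > 0 -> exists g, P g /\ norm (vsub y g) < eps.

Lemma shrink_ball (P : V -> Prop) y0 r b :
  r > 0 -> b > 0 -> ~ dense_in_ball P y0 r ->
  exists y r', r' > 0 /\ norm (vsub y y0) + r' <= r /\ r' <= b /\
    forall g, P g -> r' < norm (vsub y g).
Proof.
  intros Hr Hb Hnd.
  assert (Gap : exists y e, norm (vsub y y0) < r /\ e > 0 /\
                  forall g, P g -> e <= norm (vsub y g)).
  { apply NNPP; intro C. apply Hnd. intros y e Hy He. apply NNPP; intro C2.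
    apply C. exists y, e. repeat split; auto.
    intros g Pg. apply Rnot_lt_le. intro Lt. apply C2. exists g; auto. }
  destruct Gap as [y [e [Hy [He Hg]]]].
  pose proof (Rmin_l (Rmin ((r - norm (vsub y y0)) / 2) (e / 2)) b) as M1.
  pose proof (Rmin_r (Rmin ((r - norm (vsub y y0)) / 2) (e / 2)) b) as M2.
  pose proof (Rmin_l ((r - norm (vsub y y0)) / 2) (e / 2)) as M3.
  pose proof (Rmin_r ((r - norm (vsub y y0)) / 2) (e / 2)) as M4.
  set (r' := Rmin (Rmin ((r - norm (vsub y y0)) / 2) (e / 2)) b) in *.
  assert (r'_pos : 0 < r') by (apply Rmin_pos; [apply Rmin_pos|]; lra).
  exists y, r'. repeat split; try lra.
  intros g Pg. specialize (Hg g Pg). lra.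
Qed.

(** Baire: if countably many sets cover the space, one of them is dense in
    some ball.  Otherwise one builds nested balls, the n-th avoiding the n-th
    set, whose common point lies in no set. *)
Theorem baire (P : nat -> V -> Prop) :
  (forall g, exists n, P n g) ->
  exists n y0 r, r > 0 /\ dense_in_ball (P n) y0 r.
Proof.
  intro Cover. apply NNPP; intro Nowhere.
  set (Step n (p q : V * R) := snd p > 0 ->
         snd q > 0 /\ norm (vsub (fst q) (fst p)) + snd q <= snd p /\
         snd q <= / 2 ^ S n /\ forall g, P n g -> snd q < norm (vsub (fst q) g)).
  destruct (iterate_choice Step (hs_zero, 1)) as [balls [Start Next]].
  { intros n [y0 r]. destruct (Rlt_dec 0 r) as [Hr|Hr].
    - destruct (shrink_ball (P n) y0 r (/ 2 ^ S n)) as [y [r' Hy]]; auto.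
      + apply Rinv_0_lt_compat, pow2_pos.
      + intro D. apply Nowhere. exists n, y0, r. auto.
      + exists (y, r'). intros _. exact Hy.
    - exists (y0, r). unfold Step; simpl; lra. }
  assert (Pos : forall k, snd (balls k) > 0).
  { induction k; [rewrite Start; simpl; lra | apply (Next k IHk)]. }
  destruct (nested_balls (fun k => fst (balls k)) (fun k => snd (balls k)) 1)
    as [z Hz].
  - intro k. left. apply Pos.
  - intro k. apply (Next k (Pos k)).
  - intros [|k]; [rewrite Start; simpl; lra|].
    unfold Rdiv. rewrite Rmult_1_l. apply (Next k (Pos k)).
  - destruct (Cover z) as [n Pz].
    destruct (Next n (Pos n)) as [_ [_ [_ Avoid]]].
    specialize (Avoid z Pz). specialize (Hz (S n)). simpl in Hz.
    rewrite norm_vsub_sym in Hz. lra.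
Qed.

End Baire.
(** ** The bounded inverse theorem for closed operators

    The Baire theorem gives a ball in
    which images of vectors of norm ≤ n are dense; by linearity and scaling,
    every [h] is approximated by [L x] with ‖x‖ ≤ M(‖h‖ + ε); iterating the
    approximation on the residuals yields a series converging to an exact
    preimage, of norm ≤ M‖h‖ + ε, and closedness identifies its image. *)

Section BoundedInverse.
Variable V : HilbertSpace.
Variable L : Op V V.
Hypothesis L_linear : is_linear_op L.
Hypothesis L_closed : closed_op L.
Hypothesis L_injective : forall x y, dom L x -> dom L y -> app L x = app L y -> x = y.
Hypothesis L_surjective : forall g, exists x, dom L x /\ app L x = g.

Definition bounded_images (n : nat) (g : V) : Prop :=
  exists x, dom L x /\ app L x = g /\ norm x <= INR n.

Lemma bounded_images_somewhere_dense :
  exists n y0 r, r > 0 /\ dense_in_ball V (bounded_images n) y0 r.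
Proof.
  apply baire. intro g. destruct (L_surjective g) as [x [Dx Ex]].
  destruct (INR_unbounded (norm x)) as [n Hn].
  exists n, x. repeat split; auto; lra.
Qed.

(** Small vectors are approximated by images of uniformly bounded vectors:
    approximate [y0 + h] and [y0] and subtract. *)
Lemma approx_small_vectors :
  exists N r, 0 <= N /\ r > 0 /\ forall h e, norm h < r -> e > 0 ->
    exists x, dom L x /\ norm x <= N /\ norm (vsub h (app L x)) < e.
Proof.
  destruct bounded_images_somewhere_dense as [n [y0 [r [Hr Dense]]]].
  exists (2 * INR n), r. pose proof (pos_INR n). split; [lra|]. split; [exact Hr|].
  intros h e Hh He.
  destruct (Dense (hs_add y0 h) (e / 2)) as [g1 [[x1 [D1 [E1 N1]]] G1]].
  { rewrite vsub_add_cancel_l; auto. } { lra. }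
  destruct (Dense y0 (e / 2)) as [g2 [[x2 [D2 [E2 N2]]] G2]].
  { rewrite vsub_diag, norm_zero; lra. } { lra. }
  destruct (lin_vsub _ _ L L_linear x1 x2 D1 D2) as [D3 E3].
  exists (vsub x1 x2). split; [exact D3|]. split.
  - pose proof (norm_vsub_le _ x1 x2). lra.
  - rewrite E3, E1, E2, (vsub_recentre _ h g1 g2 y0).
    pose proof (norm_vsub_le _ (vsub (hs_add y0 h) g1) (vsub y0 g2)). lra.
Qed.

Lemma approx_preimage :
  exists M, M > 0 /\ forall h e, e > 0 ->
    exists x, dom L x /\ norm x <= M * (norm h + e) /\ norm (vsub h (app L x)) < e.
Proof.
  destruct approx_small_vectors as [N [r [HN [Hr Approx]]]].
  assert (Nr : 0 <= 2 * N / r) by (unfold Rdiv; apply Rmult_le_pos; [lra | left; apply Rinv_0_lt_compat; lra]).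
  exists (2 * N / r + 1). split; [lra|]. intros h e He.
  pose proof (norm_nonneg _ h).
  set (a := norm h + e). assert (Ha : 0 < a) by (unfold a; lra).
  set (t := r / (2 * a)).
  assert (Ht : 0 < t) by (unfold t; apply Rdiv_lt_0_compat; lra).
  assert (Hit : 0 < / t) by (apply Rinv_0_lt_compat; lra).
  destruct (Approx (hs_scal (mkC t 0) h) (t * e)) as [x' [Dx' [Nx' Rx']]].
  - rewrite norm_scal_real by lra.
    assert (t * a = r / 2) by (unfold t; field; lra). unfold a in *. nra.
  - nra.
  - destruct L_linear as [_ [_ Dscal]].
    destruct (Dscal (mkC (/ t) 0) x' Dx') as [Dx Ex].
    exists (hs_scal (mkC (/ t) 0) x'). split; [exact Dx|]. split.
    + rewrite norm_scal_real by lra. fold a.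
      assert (/ t = 2 * a / r) by (unfold t; field; split; lra).
      assert (2 * a / r * N = 2 * N / r * a) by (field; lra).
      assert (/ t * norm x' <= / t * N) by (apply Rmult_le_compat_l; lra).
      nra.
    + rewrite Ex, <- (scal_inv_real _ t h) at 1 by lra.
      rewrite <- scal_vsub, norm_scal_real by lra.
      apply (Rmult_lt_compat_l (/ t)) in Rx'; [|exact Hit].
      replace (/ t * (t * e)) with e in Rx' by (field; lra). exact Rx'.
Qed.

Section SuccessiveApproximation.
Variable M : R.
Hypothesis M_pos : M > 0.
Hypothesis approx : forall h e, e > 0 ->
  exists x, dom L x /\ norm x <= M * (norm h + e) /\ norm (vsub h (app L x)) < e.
Variables (y : V) (dl : R).
Hypothesis dl_pos : dl > 0.

(** Partial sums [s k] of the approximation series: each new term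
    approximates the current residual [y - L (s k)] to accuracy dl/2^k. *)
Lemma approximation_sequence :
  exists s : nat -> V, s 0%nat = hs_zero /\ forall k,
    dom L (s k) /\
    norm (vsub (s (S k)) (s k)) <= M * (norm (vsub y (app L (s k))) + dl / 2 ^ k) /\
    norm (vsub y (app L (s (S k)))) < dl / 2 ^ k.
Proof.
  set (Step k a b := dom L a -> dom L b /\
         norm (vsub b a) <= M * (norm (vsub y (app L a)) + dl / 2 ^ k) /\
         norm (vsub y (app L b)) < dl / 2 ^ k).
  destruct (iterate_choice Step hs_zero) as [s [Start Next]].
  - intros k a. destruct (classic (dom L a)) as [Da|Na]; [|exists a; intro; contradiction].
    destruct (approx (vsub y (app L a)) (dl / 2 ^ k)) as [x [Dx [Nx Rx]]].
    { apply Rdiv_lt_0_compat; [lra | apply pow2_pos]. }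
    destruct L_linear as [_ [Dadd _]]. destruct (Dadd a x Da Dx) as [Dax Eax].
    exists (hs_add a x). intros _. split; [exact Dax|].
    rewrite vsub_add_cancel_l, Eax, vsub_add_r. auto.
  - assert (Dom : forall k, dom L (s k)).
    { induction k; [rewrite Start; apply L_linear | apply (Next k IHk)]. }
    exists s. split; [exact Start|]. intro k. split; [apply Dom | apply (Next k (Dom k))].
Qed.

Lemma successive_approximation :
  exists x, dom L x /\ app L x = y /\ norm x <= M * norm y + 4 * M * dl.
Proof.
  destruct approximation_sequence as [s [Start Props]].
  assert (Tail : forall k, norm (vsub (s (S (S k))) (s (S k))) <= (3 / 2 * M * dl) / 2 ^ k).
  { intro k. destruct (Props (S k)) as [_ [Step _]]. destruct (Props k) as [_ [_ Res]].
    pose proof (pow2_pos k).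
    assert (dl / 2 ^ S k = dl / 2 ^ k / 2) by (simpl; field; lra).
    assert (3 / 2 * M * dl / 2 ^ k = M * (dl / 2 ^ k + dl / 2 ^ k / 2)) by (field; lra).
    nra. }
  destruct (geometric_limit V (fun k => s (S k)) _ Tail) as [l [Conv Close]].
  destruct (L_closed (fun k => s (S k)) l y) as [Dl El].
  - intro k. apply Props.
  - exact Conv.
  - intros eps He. destruct (geom_small dl eps He) as [N HN].
    exists N. intros n Hn. cbv beta. rewrite norm_vsub_sym.
    destruct (Props n) as [_ [_ Res]]. specialize (HN n Hn). lra.
  - exists l. split; [exact Dl|]. split; [exact El|].
    destruct (Props 0%nat) as [_ [First _]].
    rewrite Start, vsub_0_r, lin_zero, vsub_0_r in First by exact L_linear.
    specialize (Close 0%nat). pose proof (norm_le_vsub _ l (s 1%nat)).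
    replace (dl / 2 ^ 0) with dl in First by (simpl; field).
    replace (2 * (3 / 2 * M * dl) / 2 ^ 0) with (3 * M * dl) in Close by (simpl; field).
    lra.
Qed.

End SuccessiveApproximation.

Theorem bounded_inverse : exists c, forall x, dom L x -> norm x <= c * norm (app L x).
Proof.
  destruct approx_preimage as [M [HM Approx]].
  exists M. intros x0 Dx0. apply Rle_plus_epsilon. intros eps Heps.
  destruct (successive_approximation M HM Approx (app L x0) (eps / (4 * M)))
    as [x [Dx [Ex Nx]]].
  { apply Rdiv_lt_0_compat; lra. }
  pose proof (L_injective x x0 Dx Dx0 Ex) as Same. subst x.
  replace (4 * M * (eps / (4 * M))) with eps in Nx by (field; lra). lra.
Qed.

End BoundedInverse.

Section Limits.
Variable V : HilbertSpace.

Lemma converges_add (u v : nat -> V) a b :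
  converges u a -> converges v b -> converges (fun n => hs_add (u n) (v n)) (hs_add a b).
Proof.
  intros Hu Hv eps He.
  destruct (Hu (eps / 2)) as [N1 H1]; [lra|]. destruct (Hv (eps / 2)) as [N2 H2]; [lra|].
  exists (N1 + N2)%nat. intros n Hn. cbv beta in *.
  specialize (H1 n ltac:(lia)). specialize (H2 n ltac:(lia)).
  rewrite vsub_add. pose proof (norm_triangle _ (vsub (u n) a) (vsub (v n) b)). lra.
Qed.

Lemma converges_scal (u : nat -> V) a p :
  converges u a -> converges (fun n => hs_scal p (u n)) (hs_scal p a).
Proof.
  intros Hu eps He.
  set (L := sqrt (Re p * Re p + Im p * Im p)). assert (L0 : 0 <= L) by apply sqrt_pos.
  destruct (Hu (eps / (L + 1))) as [N HN]; [apply Rdiv_lt_0_compat; lra|].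
  exists N. intros n Hn. specialize (HN n Hn). cbv beta in *.
  rewrite <- scal_vsub, norm_scal. fold L.
  apply (Rmult_lt_compat_l (L + 1)) in HN; [|lra].
  replace ((L + 1) * (eps / (L + 1))) with eps in HN by (field; lra).
  pose proof (norm_nonneg _ (vsub (u n) a)). nra.
Qed.

End Limits.

Definition shifted {V : HilbertSpace} (B : Op V V) (lam : Cpx) : Op V V :=
  {| dom := dom B ; app := shift_app B lam |}.

Section Shifted.
Variable V : HilbertSpace.
Variable B : Op V V.
Variable lam : Cpx.

Lemma shifted_linear : is_linear_op B -> is_linear_op (shifted B lam).
Proof.
  intros [B0 [Badd Bscal]]. split; [exact B0|split].
  - intros x y Dx Dy. destruct (Badd x y Dx Dy) as [D E]. split; [exact D|].
    simpl. unfold shift_app. rewrite E, hs_scal_add_r. apply vsub_add.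
  - intros a x Dx. destruct (Bscal a x Dx) as [D E]. split; [exact D|].
    simpl. unfold shift_app. rewrite E, (scal_comm _ lam a x), scal_vsub. reflexivity.
Qed.

(** A bounded perturbation of a closed operator is closed:
    B u_n = (B - λ) u_n + λ u_n converges when both terms do. *)
Lemma shifted_closed : closed_op B -> closed_op (shifted B lam).
Proof.
  intros Bcl u x g Du Cu Cg. simpl in Du, Cg.
  assert (CB : converges (fun n => app B (u n)) (hs_add g (hs_scal lam x))).
  { replace (fun n => app B (u n))
      with (fun n => hs_add (shift_app B lam (u n)) (hs_scal lam (u n)))
      by (apply functional_extensionality; intro n; apply vsub_add_back).
    apply converges_add; [exact Cg | apply converges_scal, Cu]. }
  destruct (Bcl u x _ Du Cu CB) as [Dx Ex]. split; [exact Dx|].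
  simpl. unfold shift_app. rewrite Ex. apply vsub_add_cancel.
Qed.

(** B - λ is injective when λ is not an eigenvalue: its kernel consists of
    eigenvectors. *)
Lemma shifted_injective : is_linear_op B -> ~ in_point_spectrum B lam ->
  forall x y, dom B x -> dom B y -> shift_app B lam x = shift_app B lam y -> x = y.
Proof.
  intros Blin Hnp x y Dx Dy Exy.
  destruct (lin_vsub _ _ (shifted B lam) (shifted_linear Blin) x y Dx Dy) as [Dz Ez].
  simpl in Ez. rewrite Exy, vsub_diag in Ez.
  apply vsub_eq0, NNPP. intro Nz. apply Hnp.
  exists (vsub x y). split; [exact Dz|]. split; [exact Nz|].
  apply vsub_eq0. exact Ez.
Qed.

Lemma resolvent_of_bijective_shift : is_linear_op B -> closed_op B ->
  (forall x y, dom B x -> dom B y -> shift_app B lam x = shift_app B lam y -> x = y) ->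
  (forall g, exists x, dom B x /\ shift_app B lam x = g) ->
  in_resolvent B lam.
Proof.
  intros Blin Bcl Inj Surj. split; [exact Inj|]. split; [exact Surj|].
  exact (bounded_inverse V (shifted B lam) (shifted_linear Blin) (shifted_closed Bcl) Inj Surj).
Qed.

End Shifted.

Section Intertwining.
Variables H K : HilbertSpace.
Variables (A : Op H H) (B : Op K K) (T : Op H K).
Hypothesis T_linear : is_linear_op T.
Hypothesis dom_A_in_T : forall xi, dom A xi -> dom T xi.
Hypothesis range_A_in_T : forall xi, dom A xi -> dom T (app A xi).
Hypothesis T_into_B : forall xi, dom A xi -> dom B (app T xi).
Hypothesis intertwines : forall xi, dom A xi -> app B (app T xi) = app T (app A xi).

Lemma intertwines_shift lam xi : dom A xi ->
  shift_app B lam (app T xi) = app T (shift_app A lam xi).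
Proof.
  intro Dxi. unfold shift_app. rewrite intertwines by exact Dxi.
  destruct T_linear as [_ [_ Tscal]].
  destruct (Tscal lam xi (dom_A_in_T xi Dxi)) as [Dl El]. rewrite <- El.
  symmetry. apply (lin_vsub _ _ T T_linear); [apply range_A_in_T | ]; assumption.
Qed.

Lemma shift_surjective_via_intertwining lam :
  (forall k, exists x, dom T x /\ app T x = k) ->
  (forall h, exists x, dom A x /\ shift_app A lam x = h) ->
  forall g, exists x, dom B x /\ shift_app B lam x = g.
Proof.
  intros T_onto A_onto g.
  destruct (T_onto g) as [h [_ Eh]]. destruct (A_onto h) as [xi [Dxi Exi]].
  exists (app T xi). split; [exact (T_into_B xi Dxi)|].
  rewrite intertwines_shift, Exi by exact Dxi. exact Eh.
Qed.

End Intertwining.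

Theorem corollary2p10 (H K : HilbertSpace) (A : Op H H) (B : Op K K) (T : Op H K) :
  closed_dd_op A -> closed_dd_op B ->
  dashv_via T A B ->
  inverse_bounded_everywhere T ->
  forall lam : Cpx, in_resolvent A lam -> ~ in_point_spectrum B lam -> in_resolvent B lam.
Proof.
  intros _ [B_linear [B_closed _]] [[[T_linear _] [io0a [io0b [io1 io2]]]] _]
         [T_onto _] lam [_ [A_shift_onto _]] not_eigen.
  apply resolvent_of_bijective_shift; [exact B_linear | exact B_closed | |].
  - exact (shifted_injective K B lam B_linear not_eigen).
  - exact (shift_surjective_via_intertwining H K A B T T_linear io0a io0b io1 io2
             lam T_onto A_shift_onto).
Qed.
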